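(* Let $S$ be a semigroup and $a\in S$ an idempotent with $aSa\subseteq\operatorname{Reg}(S)$; let $P=\{x\in Sa: x\,\mathscr L\,ax\}$ and let $\rho$ be the number of $\mathscr R^P$-classes contained in $\widehat R^a_a=\{x\in P: ax\ \mathscr R^{aSa}\ a\}$. Then $$\operatorname{rank}(\mathbb E(Sa))\ge\operatorname{rank}(\mathbb E(aSa))+\rho-1\quad\text{and}\quad \operatorname{idrank}(\mathbb E(Sa))\ge\operatorname{idrank}(\mathbb E(aSa))+\rho-1,$$ with equality in both if $P$ is RI-dominated.
   Context: $\mathbb E(T)$ is the subsemigroup of $T$ generated by its idempotents. $\operatorname{rank}(T)$ is the minimum cardinality of a generating set; for idempotent-generated $T$, $\operatorname{idrank}(T)$ is the minimum cardinality of a generating set consisting of idempotents. $\mathscr R^P$, $\mathscr R^{aSa}$ are Green's $\mathscr R$-relations in $P$ and $aSa$. A semigroup $T$ is RI-dominated if for every $x\in T$ there is a right identity $e$ of $T$ with $x\in eT^1$. *)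

Set Implicit Arguments.

Section Semigroup.
Variables (S : Type) (mul : S -> S -> S).

Inductive generated (X : S -> Prop) : S -> Prop :=
| gen_base x : X x -> generated X x
| gen_mul x y : generated X x -> generated X y -> generated X (mul x y).

Definition idempotent (e : S) : Prop := mul e e = e.

Definition Egen (T : S -> Prop) : S -> Prop :=
  generated (fun e => T e /\ idempotent e).

Definition gen_set (T X : S -> Prop) : Prop :=
  (forall x, X x -> T x) /\ (forall x, T x -> generated X x).

Definition idgen_set (T X : S -> Prop) : Prop :=
  gen_set T X /\ (forall x, X x -> idempotent x).

Definition Sa (a : S) : S -> Prop := fun x => exists s, x = mul s a.
Definition aSa (a : S) : S -> Prop := fun x => exists s, x = mul a (mul s a).

Definition regular (x : S) : Prop := exists y, mul (mul x y) x = x.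

Definition L_rel (x y : S) : Prop :=
  (x = y \/ exists s, x = mul s y) /\ (y = x \/ exists s, y = mul s x).

(* Green's R-relation in the subsemigroup T: x in yT^1 and y in xT^1 *)
Definition R_in (T : S -> Prop) (x y : S) : Prop :=
  (x = y \/ exists t, T t /\ x = mul y t) /\ (y = x \/ exists t, T t /\ y = mul x t).

Definition Pset (a : S) : S -> Prop := fun x => Sa a x /\ L_rel x (mul a x).

Definition Rhat (a : S) : S -> Prop :=
  fun x => Pset a x /\ R_in (aSa a) (mul a x) a.

Definition RP_class (a : S) (C : S -> Prop) : Prop :=
  exists x, Pset a x /\ C = (fun y => Pset a y /\ R_in (Pset a) y x).

(* the R^P-classes contained in \hat R^a_a, other than the class of a;
   their number is rho - 1 (the class of a is one of them). *)
Definition other_classes (a : S) (C : S -> Prop) : Prop :=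
  RP_class a C /\ (forall y, C y -> Rhat a y) /\ ~ C a.

Definition RI_dominated (T : S -> Prop) : Prop :=
  forall x, T x -> exists e, T e /\ (forall y, T y -> mul y e = y) /\
     (x = e \/ exists t, T t /\ x = mul e t).

End Semigroup.

Definition card_le {A B : Type} (P : A -> Prop) (Q : B -> Prop) : Prop :=
  exists f : A -> B, (forall x, P x -> Q (f x)) /\
    (forall x y, P x -> P y -> f x = f y -> x = y).

(* disjoint union of subsets, for cardinal addition *)
Definition sum_pred {A B : Type} (P : A -> Prop) (Q : B -> Prop) : A + B -> Prop :=
  fun z => match z with inl x => P x | inr y => Q y end.

From Stdlib Require Import ClassicalEpsilon FunctionalExtensionality PropExtensionality.

(* Left multiplication by a is a surjective homomorphism E(Sa) -> E(aSa), so
   the images of generators of E(Sa) generate E(aSa).  Its fibre over a is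
   F = { f : f a = f, a f = a }; such f are idempotents which admit no
   factorisation f = x y other than with x = f, so they lie in every generating
   set of E(Sa), and every R^P-class in \hat R^a_a other than that of a
   contains one of them.  Conversely, when P is RI-dominated, every idempotent e
   of Sa factors as e = f (a e) with f a right identity of P, and such f lie in
   F; so generators of E(aSa) together with F generate E(Sa), and distinct
   elements of F lie in distinct R^P-classes. *)

Lemma choice_on {A B : Type} (b : B) (D : A -> Prop) (R : A -> B -> Prop) :
  (forall x, D x -> exists y, R x y) -> exists f, forall x, D x -> R x (f x).
Proof.
intros H. exists (fun x => epsilon (inhabits b) (R x)).
intros x Dx. apply epsilon_spec, H, Dx.
Qed.

Lemma card_le_sum {A B C : Type} (P : A -> Prop) (Q : B -> Prop) (R : C -> Prop)
    (f : A -> C) (g : B -> C) :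
  (forall x, P x -> R (f x)) ->
  (forall x y, P x -> P y -> f x = f y -> x = y) ->
  (forall x, Q x -> R (g x)) ->
  (forall x y, Q x -> Q y -> g x = g y -> x = y) ->
  (forall x y, P x -> Q y -> f x <> g y) ->
  card_le (sum_pred P Q) R.
Proof.
intros fR f_inj gR g_inj fg.
exists (fun z => match z with inl x => f x | inr y => g y end). split.
- intros [x|y]; simpl; auto.
- intros [x|y] [x'|y'] H H' E; simpl in *.
  + f_equal; auto.
  + destruct (fg x y' H H' E).
  + destruct (fg x' y H' H (eq_sym E)).
  + f_equal; auto.
Qed.

Lemma card_le_union_sum {A B : Type} (Y K : A -> Prop) (Q : B -> Prop) (f : A -> B) :
  (forall x, K x -> ~ Y x -> Q (f x)) ->
  (forall x y, K x -> K y -> ~ Y x -> ~ Y y -> f x = f y -> x = y) ->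
  card_le (fun x => Y x \/ K x) (sum_pred Y Q).
Proof.
intros fQ f_inj.
exists (fun x => if excluded_middle_informative (Y x) then inl x else inr (f x)).
split.
- intros x Hx. destruct (excluded_middle_informative (Y x)) as [Yx|nYx]; simpl; auto.
  destruct Hx; [contradiction | auto].
- intros x y Hx Hy.
  destruct (excluded_middle_informative (Y x)) as [Yx|nYx];
  destruct (excluded_middle_informative (Y y)) as [Yy|nYy];
  intros E; try discriminate; injection E; auto.
  destruct Hx, Hy; try contradiction. auto.
Qed.

Section Semigroup.
Variables (S : Type) (mul : S -> S -> S).
Hypothesis assoc : forall x y z, mul x (mul y z) = mul (mul x y) z.
Variable a : S.
Hypothesis Ha : idempotent mul a.
Local Infix "*" := mul.

Lemma Sa_fixed x : Sa mul a x <-> x * a = x.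
Proof.
split.
- intros [s ->]. rewrite <- assoc, Ha. reflexivity.
- intros H. exists x. symmetry; exact H.
Qed.

Lemma aSa_fixed x : aSa mul a x <-> a * x = x /\ x * a = x.
Proof.
split.
- intros [s ->]. rewrite !assoc, Ha, <- (assoc _ a a), Ha. auto.
- intros [ax xa]. exists x. rewrite xa. symmetry; exact ax.
Qed.

Lemma generated_sub (X Z : S -> Prop) z :
  (forall x, X x -> generated mul Z x) -> generated mul X z -> generated mul Z z.
Proof. intros XZ G; induction G; [auto | apply gen_mul; auto]. Qed.

Lemma Egen_Sa_fixed z : Egen mul (Sa mul a) z -> z * a = z.
Proof.
intros G; induction G as [x [Sx _]|x y _ _ _ IHy].
- apply Sa_fixed, Sx.
- rewrite <- assoc, IHy. reflexivity.
Qed.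

Lemma Egen_aSa_aSa z : Egen mul (aSa mul a) z -> aSa mul a z.
Proof.
intros G; induction G as [x [Ax _]|x y _ IHx _ IHy]; auto.
apply aSa_fixed in IHx as [ax _]; apply aSa_fixed in IHy as [_ ya].
apply aSa_fixed. rewrite assoc, ax, <- assoc, ya. auto.
Qed.

Lemma Egen_aSa_Egen_Sa z : Egen mul (aSa mul a) z -> Egen mul (Sa mul a) z.
Proof.
apply generated_sub. intros x [Ax Ix]. apply gen_base. split; auto.
apply Sa_fixed, aSa_fixed, Ax.
Qed.

Definition fibre_a x := x * a = x /\ a * x = a.

Lemma fibre_a_a : fibre_a a.
Proof. split; exact Ha. Qed.

Lemma fibre_a_idempotent x : fibre_a x -> idempotent mul x.
Proof.
intros [xa ax]. unfold idempotent. rewrite <- xa at 1. rewrite <- assoc, ax. exact xa.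
Qed.

Lemma fibre_a_Egen_Sa x : fibre_a x -> Egen mul (Sa mul a) x.
Proof.
intros Fx. apply gen_base. split.
- apply Sa_fixed, Fx.
- apply fibre_a_idempotent, Fx.
Qed.

Lemma Egen_Sa_prefix_a z v : Egen mul (Sa mul a) z -> a * z * v = a -> a * z = a.
Proof.
intros G; revert v; induction G as [z [Sz Iz]|x y _ IHx _ IHy]; intros v H.
- apply Sa_fixed in Sz. unfold idempotent in Iz.
  (* a z = (a z)(a z v) = a z v = a, as z a = z and z z = z *)
  transitivity (a * z * (a * z * v)).
  + rewrite H, <- assoc, Sz. reflexivity.
  + rewrite !assoc, <- (assoc a z a), Sz, <- (assoc a z z), Iz. exact H.
- assert (ax : a * x = a).
  { apply (IHx (y * v)). rewrite assoc. rewrite assoc in H. exact H. }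
  assert (ay : a * y = a).
  { apply (IHy v). rewrite assoc, ax in H. exact H. }
  rewrite assoc, ax, ay. reflexivity.
Qed.

Lemma Egen_Sa_mul_fibre x y :
  Egen mul (Sa mul a) x -> a * (x * y) = a -> a * x = a /\ x * y = x.
Proof.
intros Ex axy.
assert (ax : a * x = a) by (apply (Egen_Sa_prefix_a _ y Ex); rewrite <- assoc; exact axy).
assert (ay : a * y = a) by (rewrite <- ax at 1; rewrite <- assoc; exact axy).
split; auto.
rewrite <- (Egen_Sa_fixed _ Ex) at 1. rewrite <- assoc, ay. apply Egen_Sa_fixed, Ex.
Qed.

Lemma fibre_a_in_generators (X : S -> Prop) z :
  (forall x, X x -> Egen mul (Sa mul a) x) -> generated mul X z -> a * z = a -> X z.
Proof.
intros XE G; induction G as [|x y Gx IHx _ _]; intros az; auto.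
destruct (Egen_Sa_mul_fibre x y (generated_sub _ _ _ XE Gx) az) as [ax ->]. auto.
Qed.

Lemma mula_mul x y : x * a = x -> a * (x * y) = a * x * (a * y).
Proof. intros xa. rewrite (assoc (a * x)), <- (assoc a x a), xa, assoc. reflexivity. Qed.

Lemma mula_idempotent e : e * a = e -> idempotent mul e -> idempotent mul (a * e).
Proof. intros ea ee. unfold idempotent. rewrite <- mula_mul, ee; auto. Qed.

Lemma Egen_Sa_mula z : Egen mul (Sa mul a) z -> Egen mul (aSa mul a) (a * z).
Proof.
intros G; induction G as [e [Se Ie]|x y Gx IHx _ IHy].
- apply Sa_fixed in Se. apply gen_base. split.
  + apply aSa_fixed. rewrite assoc, Ha, <- assoc, Se. auto.
  + apply mula_idempotent; auto.
- rewrite mula_mul by apply (Egen_Sa_fixed _ Gx). apply gen_mul; auto.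
Qed.

Definition image_mula (X : S -> Prop) y := exists x, X x /\ y = a * x.

Lemma generated_image_mula (X : S -> Prop) z :
  (forall x, X x -> Egen mul (Sa mul a) x) ->
  generated mul X z -> generated mul (image_mula X) (a * z).
Proof.
intros XE G; induction G as [x Xx|x y Gx IHx _ IHy].
- apply gen_base. exists x; auto.
- rewrite mula_mul by apply (Egen_Sa_fixed _ (generated_sub _ _ _ XE Gx)).
  apply gen_mul; auto.
Qed.

Local Notation P := (Pset mul a).

Lemma Pset_mul p q : P p -> P q -> P (p * q).
Proof.
intros [_ [[Ep|[s Ep]] _]] [Sq _]; apply Sa_fixed in Sq; split.
1, 3: apply Sa_fixed; rewrite <- assoc, Sq; reflexivity.
all: split; [|right; exists a; rewrite assoc; reflexivity].
- left. rewrite assoc, <- Ep. reflexivity.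
- right. exists s. rewrite Ep at 1. rewrite !assoc. reflexivity.
Qed.

Lemma fibre_a_Pset x : fibre_a x -> P x.
Proof.
intros [xa ax]. split.
- apply Sa_fixed, xa.
- rewrite ax. split; right; [exists x | exists a]; auto.
Qed.

Lemma aSa_Pset t : aSa mul a t -> P t.
Proof.
intros At. apply aSa_fixed in At as [at_ ta]. split.
- apply Sa_fixed, ta.
- rewrite at_. split; left; auto.
Qed.

Lemma idempotent_Sa_Pset e : Sa mul a e -> idempotent mul e -> P e.
Proof.
intros Se Ie. pose proof Se as ea. apply Sa_fixed in ea. split; auto. split.
- right. exists e. rewrite assoc, ea. symmetry; exact Ie.
- right. exists a. reflexivity.
Qed.

Lemma R_in_sym (T : S -> Prop) x y : R_in mul T x y -> R_in mul T y x.
Proof. intros [H1 H2]; split; auto. Qed.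

Lemma R_in_P_trans x y z : R_in mul P x y -> R_in mul P y z -> R_in mul P x z.
Proof.
intros [xy yx] [yz zy]; split.
- destruct xy as [->|[t [Pt ->]]]; auto.
  destruct yz as [->|[t' [Pt' ->]]]; right; eauto.
  exists (t' * t). split; [apply Pset_mul; auto | rewrite assoc; reflexivity].
- destruct zy as [->|[t [Pt ->]]]; auto.
  destruct yx as [->|[t' [Pt' ->]]]; right; eauto.
  exists (t' * t). split; [apply Pset_mul; auto | rewrite assoc; reflexivity].
Qed.

Definition RP_class_of x : S -> Prop := fun y => P y /\ R_in mul P y x.

Lemma RP_class_eq C C' e : RP_class mul a C -> RP_class mul a C' -> C e -> C' e -> C = C'.
Proof.
intros [x [_ ->]] [x' [_ ->]] [_ ex] [_ ex'].
extensionality y; apply propositional_extensionality.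
split; intros [Py Ry]; split; auto; eapply R_in_P_trans; eauto;
  eapply R_in_P_trans; eauto; apply R_in_sym; auto.
Qed.

Lemma other_class_fibre C : other_classes mul a C -> exists e, C e /\ fibre_a e /\ e <> a.
Proof.
intros [[x [Px EC]] [CR notCa]].
assert (Cx : C x) by (rewrite EC; split; auto; split; left; auto).
destruct (CR x Cx) as [_ [_ axRa]].
pose proof Px as [Sx [xLax _]]; apply Sa_fixed in Sx.
assert (Hw : exists w, x = w * (a * x)).
{ destruct xLax as [E|[w E]]; [exists a; rewrite assoc, Ha | exists w]; auto. }
assert (Ht : exists t, aSa mul a t /\ a = a * x * t).
{ destruct axRa as [E|[t [At E]]]; [exists a | exists t]; auto.
  split; [apply aSa_fixed; rewrite Ha; auto | rewrite <- E, Ha; reflexivity]. }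
destruct Hw as [w Hw], Ht as [t [At Ht]].
(* the witness is e = x t: it lies in Sa because x t = w (a x) t = w a *)
assert (ew : x * t = w * a).
{ rewrite Hw at 1. rewrite <- !assoc, (assoc a x t), <- Ht. reflexivity. }
assert (Fe : fibre_a (x * t)).
{ split; [rewrite ew, <- assoc, Ha; reflexivity | rewrite assoc; symmetry; exact Ht]. }
assert (Ce : C (x * t)).
{ rewrite EC. split; [apply fibre_a_Pset, Fe|]. split; right.
  - exists t. split; [apply aSa_Pset, At | reflexivity].
  - exists x. split; auto. rewrite ew, <- assoc, <- Hw. reflexivity. }
exists (x * t). split; [exact Ce | split; [exact Fe|]].
intros E. apply notCa. rewrite <- E. exact Ce.
Qed.

Lemma fibre_a_R_eq x x' : fibre_a x -> fibre_a x' -> R_in mul P x x' -> x = x'.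
Proof.
intros [_ ax] Fx' [[E|[t [_ E]]] _]; auto.
(* x' x is both x (as x = x' t) and x' (as x' x = x' a x = x' a) *)
assert (x'x : x' * x = x).
{ rewrite E, assoc, (fibre_a_idempotent x' Fx'). reflexivity. }
destruct Fx' as [x'a _].
rewrite <- x'x, <- x'a at 1. rewrite <- assoc, ax. exact x'a.
Qed.

Lemma RP_class_of_fibre x : fibre_a x -> x <> a -> other_classes mul a (RP_class_of x).
Proof.
intros Fx xna. pose proof Fx as [xa ax]. split; [|split].
- exists x. split; auto. apply fibre_a_Pset, Fx.
- intros y [Py Ryx]. split; auto. pose proof Py as [Sy _]. apply Sa_fixed in Sy.
  assert (Aay : aSa mul a (a * y)).
  { apply aSa_fixed. rewrite assoc, Ha, <- assoc, Sy. auto. }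
  split; right.
  + exists (a * y). split; auto. rewrite assoc, Ha. reflexivity.
  + destruct Ryx as [_ [Ex|[t [Pt Ex]]]].
    * exists a. split; [apply aSa_fixed; rewrite Ha; auto|].
      rewrite <- Ex, <- assoc, xa. symmetry; exact ax.
    * pose proof Pt as [St _]. apply Sa_fixed in St. exists (a * t). split.
      -- apply aSa_fixed. rewrite assoc, Ha, <- assoc, St. auto.
      -- rewrite <- mula_mul, <- Ex; auto.
- intros [_ Rax]. apply xna. symmetry. apply fibre_a_R_eq; auto. apply fibre_a_a.
Qed.

Lemma RI_dominated_factor e :
  RI_dominated mul P -> Sa mul a e -> idempotent mul e ->
  exists f, fibre_a f /\ e = f * (a * e).
Proof.
intros RI Se Ie.
destruct (RI e (idempotent_Sa_Pset e Se Ie)) as [f [Pf [Rf ef]]].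
pose proof Pf as [Sf _]. apply Sa_fixed in Sf.
assert (fe : f * e = e).
{ destruct ef as [->|[t [_ ->]]]; rewrite ?assoc, (Rf f Pf); reflexivity. }
exists f. split.
- split; auto. apply Rf, fibre_a_Pset, fibre_a_a.
- rewrite assoc, Sf, fe. reflexivity.
Qed.

Lemma Egen_Sa_generators_lower X :
  gen_set mul (Egen mul (Sa mul a)) X ->
  gen_set mul (Egen mul (aSa mul a)) (image_mula X) /\
  card_le (sum_pred (image_mula X) (other_classes mul a)) X.
Proof.
intros [XE EX].
assert (Xa : X a).
{ apply (fibre_a_in_generators X a XE); [apply EX, fibre_a_Egen_Sa, fibre_a_a | exact Ha]. }
split; [split|].
- intros y [x [Xx ->]]. apply Egen_Sa_mula, XE, Xx.
- intros z Ez. destruct (proj1 (aSa_fixed z) (Egen_aSa_aSa z Ez)) as [az _].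
  rewrite <- az. apply generated_image_mula; auto. apply EX, Egen_aSa_Egen_Sa, Ez.
- (* a is its own chosen preimage, so chosen preimages never meet F \ {a} *)
  destruct (choice_on a (image_mula X) (fun y x => X x /\ a * x = y /\ (y = a -> x = a)))
    as [g Hg].
  { intros y [x [Xx ->]]. destruct (classic (a * x = a)) as [E|E].
    - exists a. rewrite E. auto.
    - exists x. repeat split; auto. intros; contradiction. }
  destruct (choice_on a (other_classes mul a) (fun C e => C e /\ fibre_a e /\ e <> a))
    as [h Hh].
  { apply other_class_fibre. }
  apply (card_le_sum _ _ _ g h).
  + intros y Dy. apply Hg, Dy.
  + intros y y' Dy Dy' E. destruct (Hg y Dy) as [_ [<- _]], (Hg y' Dy') as [_ [<- _]].
    rewrite E. reflexivity.
  + intros C HC. destruct (Hh C HC) as [_ [Fh _]].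
    apply (fibre_a_in_generators X); auto. apply EX, fibre_a_Egen_Sa, Fh.
    apply Fh.
  + intros C C' HC HC' E. apply (RP_class_eq C C' (h C)); try apply HC; try apply HC'.
    apply Hh, HC. rewrite E. apply Hh, HC'.
  + intros y C Dy HC E. destruct (Hg y Dy) as [_ [ay ya]], (Hh C HC) as [_ [[_ ah] hna]].
    apply hna. rewrite <- E. apply ya. rewrite <- ay, E. exact ah.
Qed.

Definition gens_with_fibre (Y : S -> Prop) x := Y x \/ fibre_a x.

Lemma Egen_Sa_generators_upper Y :
  RI_dominated mul P ->
  gen_set mul (Egen mul (aSa mul a)) Y ->
  gen_set mul (Egen mul (Sa mul a)) (gens_with_fibre Y) /\
  card_le (gens_with_fibre Y) (sum_pred Y (other_classes mul a)).
Proof.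
intros RI [YE EY].
assert (Ya : Y a).
{ apply (fibre_a_in_generators Y a (fun x Yx => Egen_aSa_Egen_Sa x (YE x Yx)));
    [|exact Ha].
  apply EY, gen_base. split; [apply aSa_fixed; rewrite Ha; auto | exact Ha]. }
split; [split|].
- intros x [Yx|Fx]; [apply Egen_aSa_Egen_Sa, YE, Yx | apply fibre_a_Egen_Sa, Fx].
- intros z Ez. induction Ez as [e [Se Ie]|x y _ IHx _ IHy]; [|apply gen_mul; auto].
  destruct (RI_dominated_factor e RI Se Ie) as [f [Ff ->]].
  apply gen_mul; [apply gen_base; right; exact Ff|].
  apply (generated_sub Y); [intros; apply gen_base; left; auto|].
  apply EY, Egen_Sa_mula, gen_base. split; auto.
- apply card_le_union_sum with (f := RP_class_of).
  + intros x Fx nYx. apply RP_class_of_fibre; auto. intros ->. contradiction.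
  + intros x x' Fx Fx' _ _ E. apply fibre_a_R_eq; auto.
    assert (Cx : RP_class_of x x) by (split; [apply fibre_a_Pset, Fx | split; left; auto]).
    rewrite E in Cx. apply Cx.
Qed.

End Semigroup.

Theorem theorem3p30 (S : Type) (mul : S -> S -> S)
  (assoc : forall x y z, mul x (mul y z) = mul (mul x y) z)
  (a : S) (Ha : idempotent mul a)
  (Hreg : forall x, aSa mul a x -> regular mul x) :
  (forall X, gen_set mul (Egen mul (Sa mul a)) X ->
     exists Y, gen_set mul (Egen mul (aSa mul a)) Y /\
       card_le (sum_pred Y (other_classes mul a)) X) /\
  (forall X, idgen_set mul (Egen mul (Sa mul a)) X ->
     exists Y, idgen_set mul (Egen mul (aSa mul a)) Y /\
       card_le (sum_pred Y (other_classes mul a)) X) /\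
  (RI_dominated mul (Pset mul a) ->
    (forall Y, gen_set mul (Egen mul (aSa mul a)) Y ->
       exists X, gen_set mul (Egen mul (Sa mul a)) X /\
         card_le X (sum_pred Y (other_classes mul a))) /\
    (forall Y, idgen_set mul (Egen mul (aSa mul a)) Y ->
       exists X, idgen_set mul (Egen mul (Sa mul a)) X /\
         card_le X (sum_pred Y (other_classes mul a)))).
Proof.
split; [|split].
- intros X HX. eexists. apply (Egen_Sa_generators_lower S mul assoc a Ha X HX).
- intros X [HX XI]. destruct (Egen_Sa_generators_lower S mul assoc a Ha X HX) as [HY card].
  eexists. split; [split|]; eauto.
  intros y [x [Xx ->]]. apply (mula_idempotent S mul assoc a); auto.
  apply (Egen_Sa_fixed S mul assoc a Ha), (proj1 HX), Xx.
- intros RI. split.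
  + intros Y HY. eexists. apply (Egen_Sa_generators_upper S mul assoc a Ha Y RI HY).
  + intros Y [HY YI]. destruct (Egen_Sa_generators_upper S mul assoc a Ha Y RI HY) as [HX card].
    eexists. split; [split|]; eauto.
    intros x [Yx|Fx]; [auto | apply (fibre_a_idempotent S mul assoc a), Fx].
Qed.
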